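(* Let $0<\alpha\le 2\pi/3$ and let $u,v\in V$ with $(u,v)\in N_\alpha$. Then there is a path $u_0,\dots,u_m$ with $u_0=u$, $u_m=v$ and $\{u_i,u_{i+1}\}\in E^-_\alpha$ for all $i=0,\dots,m-1$.
   Context: Let $V$ be a finite set of pairwise distinct points (nodes) in the Euclidean plane, $d$ the Euclidean distance, and $R>0$. Fix a finite increasing sequence of radius levels $0<r_1<r_2<\dots<r_k=R$. For $u\in V$ and $1\le i\le k$ let $S_i(u)=\{v\in V\setminus\{u\}: d(u,v)\le r_i\}$. For $0<\alpha<2\pi$, a closed cone of width $\alpha$ with apex $u$ is a set $\{u+t(\cos\varphi,\sin\varphi): t\ge 0,\ \varphi\in[\theta-\alpha/2,\theta+\alpha/2]\}$ for some $\theta$. A finite set $S\subseteq V\setminus\{u\}$ has an $\alpha$-gap (at $u$) if some closed cone of width $\alpha$ with apex $u$ contains no node of $S$ (in particular $\emptyset$ has an $\alpha$-gap). The algorithm CBTC($\alpha$) assigns to each $u$ the index $i_u$ = the least $i\in\{1,\dots,k\}$ such that $S_i(u)$ has no $\alpha$-gap, or $i_u=k$ if there is no such $i$; set $N_\alpha(u)=S_{i_u}(u)$ and $N_\alpha=\{(u,v): v\in N_\alpha(u)\}$ (a directed relation, not necessarily symmetric). Let $E^-_\alpha=\{\{u,v\}: (u,v)\in N_\alpha\text{ and }(v,u)\in N_\alpha\}$. *)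

From Stdlib Require Import Reals List.
Import ListNotations.
Open Scope R_scope.

Definition point := (R * R)%type.

Definition dist (p q : point) : R :=
  sqrt ((fst p - fst q) ^ 2 + (snd p - snd q) ^ 2).

(* Radius levels r_1 < ... < r_k, stored 0-based in a list rs
   (rs = [r_1; ...; r_k]); R = r_k is the last element. *)
Definition radius_levels_ok (rs : list R) : Prop :=
  rs <> [] /\
  (forall i, (i < length rs)%nat -> 0 < nth i rs 0) /\
  (forall i j, (i < j < length rs)%nat -> nth i rs 0 < nth j rs 0).

Definition Sset (V : list point) (rs : list R) (i : nat) (u : point) (w : point) : Prop :=
  In w V /\ w <> u /\ dist u w <= nth i rs 0.

Definition in_cone (u : point) (alpha theta : R) (w : point) : Prop :=
  exists t phi, 0 <= t /\ theta - alpha / 2 <= phi <= theta + alpha / 2 /\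
    w = (fst u + t * cos phi, snd u + t * sin phi).

Definition has_gap (S : point -> Prop) (u : point) (alpha : R) : Prop :=
  exists theta, forall w, S w -> ~ in_cone u alpha theta w.

Definition cbtc_index (V : list point) (rs : list R) (alpha : R) (u : point) (i : nat) : Prop :=
  ((i < length rs)%nat /\ ~ has_gap (Sset V rs i u) u alpha /\
     forall j, (j < i)%nat -> has_gap (Sset V rs j u) u alpha)
  \/
  (i = (length rs - 1)%nat /\
     forall j, (j < length rs)%nat -> has_gap (Sset V rs j u) u alpha).

Definition N_alpha (V : list point) (rs : list R) (alpha : R) (u v : point) : Prop :=
  In u V /\ exists i, cbtc_index V rs alpha u i /\ Sset V rs i u v.

Definition E_minus (V : list point) (rs : list R) (alpha : R) (u v : point) : Prop :=
  N_alpha V rs alpha u v /\ N_alpha V rs alpha v u.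

(* If (u,v) is a CBTC edge but (v,u) is not, then v's final radius is shorter than
   d(u,v), so v's neighbourhood has no alpha-gap; in particular v has a neighbour w
   inside the cone of width alpha <= 2pi/3 pointing at u.  Such a w is closer than v
   to both u and v, hence (u,w) is an edge of u as well, and by induction on d(u,v)
   (over the finitely many pairs of nodes) both u and v are joined to w by paths of
   symmetric edges. *)

From Stdlib Require Import Reals List Lra Lia Psatz Classical Relations Wf_nat.
Import ListNotations.
Open Scope R_scope.

Lemma dist_sym (p q : point) : dist p q = dist q p.
Proof. unfold dist; f_equal; ring. Qed.

Lemma dist_sq (p q : point) :
  dist p q ^ 2 = (fst p - fst q) ^ 2 + (snd p - snd q) ^ 2.
Proof.
  unfold dist; apply pow2_sqrt.
  pose proof (pow2_ge_0 (fst p - fst q)); pose proof (pow2_ge_0 (snd p - snd q)); lra.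
Qed.

Lemma dist_nonneg (p q : point) : 0 <= dist p q.
Proof. apply sqrt_pos. Qed.

Lemma dist_pos (p q : point) : p <> q -> 0 < dist p q.
Proof.
  intros Hpq; destruct (dist_nonneg p q) as [|Hz]; [assumption|exfalso; apply Hpq].
  pose proof (dist_sq p q) as Hsq; rewrite <- Hz in Hsq.
  destruct p as [p1 p2], q as [q1 q2]; simpl in Hsq.
  pose proof (pow2_ge_0 (p1 - q1)); pose proof (pow2_ge_0 (p2 - q2)).
  assert (Hx : p1 - q1 = 0) by (apply NNPP; intros Hx; apply (pow_nonzero _ 2) in Hx; lra).
  assert (Hy : p2 - q2 = 0) by (apply NNPP; intros Hy; apply (pow_nonzero _ 2) in Hy; lra).
  f_equal; lra.
Qed.

Definition polar_point (v : point) (t phi : R) : point :=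
  (fst v + t * cos phi, snd v + t * sin phi).

Lemma dist_polar_point (v : point) (t phi : R) :
  0 <= t -> dist v (polar_point v t phi) = t.
Proof.
  intros Ht; unfold dist, polar_point; cbn [fst snd].
  replace ((fst v - (fst v + t * cos phi)) ^ 2 + (snd v - (snd v + t * sin phi)) ^ 2)
    with (t ^ 2 * (Rsqr (sin phi) + Rsqr (cos phi))) by (unfold Rsqr; ring).
  rewrite sin2_cos2, Rmult_1_r; apply sqrt_pow2, Ht.
Qed.

Lemma dist_polar_points_sq (v : point) (a b th phi : R) :
  dist (polar_point v a th) (polar_point v b phi) ^ 2
  = a ^ 2 + b ^ 2 - 2 * a * b * cos (phi - th).
Proof.
  rewrite dist_sq, cos_minus; unfold polar_point; cbn [fst snd].
  transitivity (a ^ 2 * ((sin th)² + (cos th)²) + b ^ 2 * ((sin phi)² + (cos phi)²)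
                - 2 * a * b * (cos phi * cos th + sin phi * sin th)).
  - unfold Rsqr; ring.
  - rewrite !sin2_cos2; ring.
Qed.

Lemma polar_coordinates (x y : R) : 0 < x ^ 2 + y ^ 2 ->
  exists th, x = sqrt (x ^ 2 + y ^ 2) * cos th /\ y = sqrt (x ^ 2 + y ^ 2) * sin th.
Proof.
  intros Hpos; set (r := sqrt (x ^ 2 + y ^ 2)).
  assert (Hr : 0 < r) by (apply sqrt_lt_R0; lra).
  assert (Hr2 : r ^ 2 = x ^ 2 + y ^ 2) by (apply pow2_sqrt; lra).
  set (c := x / r).
  assert (Hxc : x = r * c) by (unfold c; field; lra).
  assert (Hc : -1 <= c <= 1).
  { assert (Hxr : x ^ 2 <= r ^ 2) by nra.
    split; apply (Rmult_le_reg_r r); try exact Hr;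
      rewrite (Rmult_comm c), <- Hxc; nra. }
  assert (Hsin : sin (acos c) = Rabs y / r).
  { rewrite sin_acos by lra.
    assert (Hsq : 1 - c² = (Rabs y / r) ^ 2).
    { unfold Rsqr; rewrite <- (pow2_abs y) in Hr2; unfold c.
      field_simplify_eq; nra. }
    rewrite Hsq; apply sqrt_pow2.
    apply Rmult_le_pos; [apply Rabs_pos | left; apply Rinv_0_lt_compat, Hr]. }
  destruct (Rle_dec 0 y) as [Hy|Hy].
  - exists (acos c); rewrite cos_acos, Hsin, Rabs_right by lra.
    split; [exact Hxc | field; lra].
  - exists (- acos c); rewrite cos_neg, sin_neg, cos_acos, Hsin, Rabs_left by lra.
    split; [exact Hxc | field; lra].
Qed.

Lemma polar_point_of_neq (u v : point) : u <> v ->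
  exists th, u = polar_point v (dist v u) th.
Proof.
  intros Huv.
  assert (Hpos : 0 < (fst u - fst v) ^ 2 + (snd u - snd v) ^ 2)
    by (rewrite <- dist_sq; pose proof (dist_pos u v Huv); nra).
  destruct (polar_coordinates _ _ Hpos) as [th [Hx Hy]].
  replace (sqrt ((fst u - fst v) ^ 2 + (snd u - snd v) ^ 2)) with (dist v u)
    in Hx, Hy by (unfold dist; f_equal; ring).
  exists th; destruct u as [u1 u2]; unfold polar_point; simpl in *; f_equal; lra.
Qed.

Lemma cos_ge_half (d : R) : - (PI / 3) <= d <= PI / 3 -> 1 / 2 <= cos d.
Proof.
  intros Hd; pose proof PI_RGT_0; rewrite <- cos_PI3.
  destruct (Rle_dec 0 d).
  - apply cos_decr_1; lra.
  - rewrite <- (cos_neg d); apply cos_decr_1; lra.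
Qed.

(* Law of cosines: with an angle of at most pi/3 at the apex,
   [|uw|^2 <= a^2 + t^2 - a t < a^2] as soon as [0 < t < a]. *)
Lemma polar_point_closer (v : point) (a t th phi : R) :
  0 < t < a -> - (PI / 3) <= phi - th <= PI / 3 ->
  dist (polar_point v a th) (polar_point v t phi) < a.
Proof.
  intros Hta Hangle.
  pose proof (cos_ge_half _ Hangle) as Hcos.
  pose proof (dist_polar_points_sq v a t th phi) as Hsq.
  pose proof (dist_nonneg (polar_point v a th) (polar_point v t phi)).
  assert (a * t * (1 / 2) <= a * t * cos (phi - th)) by (apply Rmult_le_compat_l; nra).
  nra.
Qed.

Definition rank_below {A : Type} (f : A -> R) (l : list A) (x : R) : nat :=
  length (filter (fun y => if Rlt_dec (f y) x then true else false) l).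

Lemma rank_below_le_mono {A : Type} (f : A -> R) (l : list A) (x y : R) :
  x <= y -> (rank_below f l x <= rank_below f l y)%nat.
Proof.
  intros Hxy; induction l as [|z l IH]; unfold rank_below in *; simpl; [lia|].
  destruct (Rlt_dec (f z) x), (Rlt_dec (f z) y); simpl; lra || lia.
Qed.

Lemma rank_below_lt {A : Type} (f : A -> R) (l : list A) (y : A) (x : R) :
  In y l -> f y < x -> (rank_below f l (f y) < rank_below f l x)%nat.
Proof.
  intros Hy Hlt; induction l as [|z l IH]; [contradiction|].
  pose proof (rank_below_le_mono f l (f y) x (Rlt_le _ _ Hlt)).
  destruct Hy as [->|Hy]; unfold rank_below in *; simpl.
  - destruct (Rlt_dec (f y) (f y)), (Rlt_dec (f y) x); simpl; lra || lia.
  - specialize (IH Hy).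
    destruct (Rlt_dec (f z) (f y)), (Rlt_dec (f z) x); simpl; lra || lia.
Qed.

Lemma clos_rt_sym_of_sym {A : Type} (Rel : relation A) :
  (forall x y, Rel x y -> Rel y x) ->
  forall x y, clos_refl_trans A Rel x y -> clos_refl_trans A Rel y x.
Proof.
  intros Hsym x y Hxy; induction Hxy.
  - apply rt_step, Hsym; assumption.
  - apply rt_refl.
  - eapply rt_trans; eassumption.
Qed.

Lemma last_cons_default {A : Type} (y : A) (p : list A) (d d' : A) :
  last (y :: p) d = last (y :: p) d'.
Proof.
  revert y; induction p as [|z p IH]; intros y; [reflexivity|].
  apply (IH z).
Qed.

Lemma clos_rt1n_path {A : Type} (Rel : relation A) (x z : A) :
  clos_refl_trans_1n A Rel x z ->
  exists p : list A, last (x :: p) x = z /\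
    forall i, (S i < length (x :: p))%nat ->
      Rel (nth i (x :: p) x) (nth (S i) (x :: p) x).
Proof.
  induction 1 as [x|x y z Hxy _ [p [Hlast Hsteps]]].
  - exists []; split; [reflexivity|]; simpl; lia.
  - exists (y :: p); split.
    + rewrite <- Hlast; exact (last_cons_default y p x y).
    + intros [|i] Hi; [exact Hxy|].
      change (Rel (nth i (y :: p) x) (nth (S i) (y :: p) x)).
      simpl in Hi; rewrite !(nth_indep (y :: p) x y) by (simpl; lia).
      apply Hsteps; simpl; lia.
Qed.

Section CBTC.

Variables (V : list point) (rs : list R) (alpha : R).
Hypothesis Hrs : radius_levels_ok rs.

Let N := N_alpha V rs alpha.
Let E := E_minus V rs alpha.

Lemma radius_le_mono (i j : nat) :
  (i <= j < length rs)%nat -> nth i rs 0 <= nth j rs 0.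
Proof.
  destruct Hrs as [_ [_ Hlt]]; intros Hij.
  destruct (Nat.eq_dec i j) as [->|Hne]; [lra|].
  left; apply Hlt; lia.
Qed.

Lemma cbtc_index_lt_length (u : point) (i : nat) :
  cbtc_index V rs alpha u i -> (i < length rs)%nat.
Proof.
  destruct Hrs as [Hne _]; intros [[Hi _]|[-> _]]; [assumption|].
  destruct rs; [congruence | simpl; lia].
Qed.

Lemma cbtc_index_exists (u : point) : exists i, cbtc_index V rs alpha u i.
Proof.
  set (Gapless := fun j => (j < length rs)%nat /\ ~ has_gap (Sset V rs j u) u alpha).
  destruct (classic (exists j, Gapless j)) as [Hex|Hnone].
  - destruct (dec_inh_nat_subset_has_unique_least_element Gapless
      (fun j => classic (Gapless j)) Hex) as [i [[[Hi Hgapless] Hleast] _]].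
    exists i; left; repeat split; try assumption.
    intros j Hj; apply NNPP; intros Hng.
    specialize (Hleast j (conj (Nat.lt_trans _ _ _ Hj Hi) Hng)); lia.
  - exists (length rs - 1)%nat; right; split; [reflexivity|].
    intros j Hj; apply NNPP; intros Hng; apply Hnone; exists j; split; assumption.
Qed.

(* If [v] does not reach [u], its radius cannot be the maximal one (which reaches every
   node that [u] reaches), so [v] stopped at a gapless neighbourhood. *)
Lemma cbtc_gapless_of_not_reached (u v : point) (iu iv : nat) :
  cbtc_index V rs alpha u iu -> dist u v <= nth iu rs 0 ->
  cbtc_index V rs alpha v iv -> nth iv rs 0 < dist v u ->
  ~ has_gap (Sset V rs iv v) v alpha.
Proof.
  intros Hiu Hduv [[_ [Hgapless _]]|[-> _]] Hfar; [assumption|].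
  pose proof (cbtc_index_lt_length u iu Hiu).
  assert (nth iu rs 0 <= nth (length rs - 1) rs 0) by (apply radius_le_mono; lia).
  rewrite dist_sym in Hduv; lra.
Qed.

Hypothesis Halpha : 0 < alpha <= 2 * PI / 3.

Lemma N_alpha_common_closer_neighbour (u v : point) :
  N u v -> ~ N v u ->
  exists w, N u w /\ N v w /\ dist u w < dist u v /\ dist v w < dist u v.
Proof.
  intros [HuV [iu [Hiu [HvV [Hvu Hduv]]]]] Hnot.
  destruct (cbtc_index_exists v) as [iv Hiv].
  assert (Hfar : nth iv rs 0 < dist v u).
  { apply Rnot_le_lt; intros Hle; apply Hnot; split; [assumption|].
    exists iv; repeat split; auto. }
  pose proof (cbtc_gapless_of_not_reached u v iu iv Hiu Hduv Hiv Hfar) as Hgapless.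
  destruct (polar_point_of_neq u v (not_eq_sym Hvu)) as [th Hu].
  assert (Hex : exists w, Sset V rs iv v w /\ in_cone v alpha th w).
  { apply NNPP; intros Hno; apply Hgapless; exists th; intros w Hw Hcone.
    apply Hno; exists w; split; assumption. }
  destruct Hex as [w [[HwV [Hwv Hdvw]] [t [phi [Ht [Hphi Hw]]]]]].
  assert (Hwp : w = polar_point v t phi) by exact Hw.
  assert (Hdt : dist v w = t) by (rewrite Hwp; apply dist_polar_point, Ht).
  assert (Hvw : dist v w < dist u v) by (rewrite dist_sym with (p := u); lra).
  assert (Huw : dist u w < dist u v).
  { rewrite (dist_sym u v), Hwp, Hu at 1.
    apply polar_point_closer.
    - pose proof (dist_pos v w (not_eq_sym Hwv)); lra.
    - pose proof PI_RGT_0; lra. }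
  assert (Hwu : w <> u) by (intros ->; rewrite dist_sym in Hvw; lra).
  exists w; repeat split; auto.
  - exists iu; repeat split; auto; lra.
  - exists iv; repeat split; auto.
Qed.

Lemma N_alpha_E_minus_connected (u v : point) :
  N u v -> clos_refl_trans point E u v.
Proof.
  set (pair_dist := fun p : point * point => dist (fst p) (snd p)).
  assert (Hcloser : forall a b c d, In a V -> In b V -> dist a b < dist c d ->
    (rank_below pair_dist (list_prod V V) (dist a b)
     < rank_below pair_dist (list_prod V V) (dist c d))%nat).
  { intros a b c d Ha Hb; apply (rank_below_lt pair_dist _ (a, b)), in_prod; assumption. }
  remember (rank_below pair_dist (list_prod V V) (dist u v)) as n eqn:Hn.
  revert u v Hn; induction n as [n IH] using lt_wf_ind; intros u v -> Huv.
  destruct (classic (N v u)) as [Hvu|Hvu]; [apply rt_step; split; assumption|].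
  destruct (N_alpha_common_closer_neighbour u v Huv Hvu) as [w [Huw [Hvw [Hdu Hdv]]]].
  assert (HuV : In u V) by apply Huv.
  assert (HvV : In v V) by apply Hvw.
  assert (HwV : In w V) by (destruct Huw as [_ [_ [_ [HwV _]]]]; exact HwV).
  apply rt_trans with w.
  - exact (IH _ (Hcloser u w u v HuV HwV Hdu) u w eq_refl Huw).
  - apply clos_rt_sym_of_sym; [intros a b [Hab Hba]; split; assumption|].
    exact (IH _ (Hcloser v w u v HvV HwV Hdv) v w eq_refl Hvw).
Qed.

End CBTC.

Theorem lemma3 (V : list point) (rs : list R) (alpha : R) (u v : point) :
  NoDup V ->
  radius_levels_ok rs ->
  0 < alpha <= 2 * PI / 3 ->
  In u V -> In v V ->
  N_alpha V rs alpha u v ->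
  exists path : list point,
    path <> [] /\
    hd u path = u /\
    last path u = v /\
    (forall i, (S i < length path)%nat ->
       E_minus V rs alpha (nth i path u) (nth (S i) path u)).
Proof.
  intros _ Hrs Halpha _ _ Huv.
  destruct (clos_rt1n_path _ u v
    (clos_rt_rt1n _ _ _ _ (N_alpha_E_minus_connected V rs alpha Hrs Halpha u v Huv)))
    as [p [Hlast Hsteps]].
  exists (u :: p); split; [discriminate | split; [reflexivity | split; assumption]].
Qed.
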